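(* Let $\mathfrak L$ be a GNN layer of input dimension $p$. Then there is a $\gamma\in\mathbb N_{>0}$ such that for all graphs $G$, all signals $\mathcal x:V(G)\to\mathbb R^p$, and all vertices $v\in V(G)$, $$\|\tilde{\mathfrak L}(G,\mathcal x)(v)\|_\infty\le\gamma\cdot\big(\|\mathcal x|_{N[v]}\|_\infty+1\big)\max\{\deg(v),1\}\le\gamma\cdot(\|\mathcal x\|_\infty+1)|G|.$$
   Context: Graphs are finite, simple, undirected with nonempty vertex set; $N(v)$ is the neighbourhood, $N[v]=N(v)\cup\{v\}$, $\deg(v)=|N(v)|$, $|G|=|V(G)|$. For a signal $\mathcal x$ and $W\subseteq V(G)$, $\|\mathcal x|_W\|_\infty=\max_{w\in W}\|\mathcal x(w)\|_\infty$ and $\|\mathcal x\|_\infty=\|\mathcal x|_{V(G)}\|_\infty$. An FNN has a finite dag skeleton, Lipschitz continuous activation functions $\mathfrak a_v$, real weights $w_e$ and biases $b_v$; sources are inputs, sinks outputs, a non-input node computes $\mathfrak a_v(b_v+\sum_{uv\in E}w_{uv}\cdot\text{value}(u))$. A GNN layer $\mathfrak L=(\mathrm{msg},\mathrm{agg},\mathrm{comb})$ of input dimension $p$ has $\mathrm{msg}:\mathbb R^{2p}\to\mathbb R^r$ and $\mathrm{comb}:\mathbb R^{p+r}\to\mathbb R^q$ computed by FNNs and $\mathrm{agg}$ coordinatewise sum, mean or maximum of finite multisets (value $\mathbf 0$ on the empty multiset); $\tilde{\mathfrak L}(G,\mathcal x)(v)=\mathrm{comb}\big(\mathcal x(v),\mathrm{agg}\{\!\{\mathrm{msg}(\mathcal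 x(v),\mathcal x(w)):w\in N(v)\}\!\}\big)$. *)

From HB Require Import structures.
From mathcomp Require Import all_boot all_order all_algebra.
From mathcomp Require Import reals.
Set Implicit Arguments. Unset Strict Implicit. Unset Printing Implicit Defensive.
Import Order.TTheory GRing.Theory Num.Theory.
Local Open Scope ring_scope.

Section Defs.
Variable R : realType.

Definition normInf (n : nat) (v : 'rV[R]_n) : R :=
  \big[Num.max/0]_(i < n) `|v ord0 i|.

(* The finite dag skeleton is given with its nodes numbered 0..p+N-1 in a
   topological order (every edge goes from a smaller to a larger index);
   the p sources (= input nodes) are the nodes 0..p-1, in the order of the
   input coordinates; the sinks are the output nodes, listed (injectively
   and exhaustively) by fnn_out in the order of the output coordinates. *)
Record fnn (p q : nat) := FNN {
  fnn_N : nat;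
  fnn_edge : rel 'I_(p + fnn_N);
  fnn_w : 'I_(p + fnn_N) -> 'I_(p + fnn_N) -> R;
  fnn_b : 'I_(p + fnn_N) -> R;
  fnn_act : 'I_(p + fnn_N) -> R -> R;
  fnn_out : 'I_q -> 'I_(p + fnn_N);
  fnn_topo : forall u v, fnn_edge u v -> (u < v)%N;
  fnn_sources : forall v : 'I_(p + fnn_N), (p <= v)%N = [exists u, fnn_edge u v];
  fnn_sinks : forall v : 'I_(p + fnn_N), (v \in codom fnn_out) = ~~ [exists u, fnn_edge v u];
  fnn_out_inj : injective fnn_out;
  fnn_lipschitz : forall v : 'I_(p + fnn_N), (p <= v)%N ->
     exists K : R, forall a b, `|fnn_act v a - fnn_act v b| <= K * `|a - b|
}.

Arguments fnn_N {p q} f.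
Arguments fnn_edge {p q} f.
Arguments fnn_w {p q} f.
Arguments fnn_b {p q} f.
Arguments fnn_act {p q} f.
Arguments fnn_out {p q} f.

Section FnnEval.
Variables (p q : nat) (F : fnn p q) (x : 'rV[R]_p).
Local Notation M := (p + fnn_N F)%N.

(* value of node k, given the list s of values of nodes 0..k-1 *)
Definition fnn_node_val (k : nat) (s : seq R) : R :=
  match (insub k : option 'I_M) with
  | Some v =>
      match (insub k : option 'I_p) with
      | Some i => x ord0 i
      | None => fnn_act F v (fnn_b F v +
                  \sum_(u : 'I_M | fnn_edge F u v) fnn_w F u v * nth 0 s u)
      end
  | None => 0
  end.

Fixpoint fnn_vals (k : nat) : seq R :=
  match k with
  | 0 => [::]
  | k'.+1 => let s := fnn_vals k' in rcons s (fnn_node_val k' s)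
  end.

Definition fnn_eval : 'rV[R]_q :=
  \row_(j < q) nth 0 (fnn_vals M) (fnn_out F j).
End FnnEval.

Inductive agg_kind := AggSum | AggMean | AggMax.

Definition aggregate (r : nat) (k : agg_kind) (s : seq 'rV[R]_r) : 'rV[R]_r :=
  match s with
  | [::] => 0
  | m :: s' =>
    match k with
    | AggSum => \sum_(a <- s) a
    | AggMean => (size s)%:R^-1 *: \sum_(a <- s) a
    | AggMax => \row_(j < r) foldr (fun (a : 'rV[R]_r) (b : R) => Num.max (a ord0 j) b) (m ord0 j) s'
    end
  end.

Record gnn_layer (p : nat) := GNNLayer {
  gl_r : nat;
  gl_q : nat;
  gl_msg : fnn (p + p) gl_r;
  gl_agg : agg_kind;
  gl_comb : fnn (p + gl_r) gl_q
}.

(* A graph is (V, adj) with V a finite type and adj a symmetric irreflexive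
   relation; signals are maps V -> R^p. *)
Definition gnn_apply (p : nat) (L : gnn_layer p) (V : finType) (adj : rel V)
    (x : V -> 'rV[R]_p) (v : V) : 'rV[R]_(gl_q L) :=
  fnn_eval (gl_comb L)
    (row_mx (x v)
       (aggregate (gl_agg L)
          [seq fnn_eval (gl_msg L) (row_mx (x v) (x w)) | w <- enum (adj v)])).

Definition deg (V : finType) (adj : rel V) (v : V) : nat := #|[pred w | adj v w]|.

Definition closed_nbhd_norm (p : nat) (V : finType) (adj : rel V)
    (x : V -> 'rV[R]_p) (v : V) : R :=
  \big[Num.max/0]_(w : V | (w == v) || adj v w) normInf (x w).

Definition signal_norm (p : nat) (V : finType) (x : V -> 'rV[R]_p) : R :=
  \big[Num.max/0]_(w : V) normInf (x w).

End Defs.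

From HB Require Import structures.
From mathcomp Require Import all_boot all_order all_algebra.
From mathcomp Require Import reals.
From mathcomp Require Import lra.
Import Order.TTheory GRing.Theory Num.Theory.
Set Implicit Arguments. Unset Strict Implicit.
Local Open Scope ring_scope.

(* A feedforward network with Lipschitz activations grows at most affinely,
   |F x| <= B (|x| + 1): along a topological order every node is a Lipschitz
   function of an affine combination of earlier nodes.  Hence each message at
   v is bounded by B_msg (|x|_N[v]| + 1); sum aggregation multiplies this by
   deg v, mean and max do not increase it, and the affine bound of comb then
   gives the first inequality for any integer gamma >= B_comb (2 + B_msg).
   The second one is monotonicity: N[v] is a subset of V and
   max (deg v, 1) <= |V|. *)

Section SupNorm.
Variable R : realType.

Lemma normInf_ge0 n (v : 'rV[R]_n) : 0 <= normInf v.
Proof. exact: bigmax_ge_id. Qed.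

Lemma le_normInf n (v : 'rV[R]_n) i : `|v ord0 i| <= normInf v.
Proof. exact: (@le_bigmax _ _ _ 0 (fun i => `|v ord0 i|)). Qed.

Lemma normInf_le n (v : 'rV[R]_n) B :
  0 <= B -> (forall i, `|v ord0 i| <= B) -> normInf v <= B.
Proof. by move=> B0 vB; apply: bigmax_le. Qed.

Lemma normInf_row_mx_le m n (a : 'rV[R]_m) (b : 'rV[R]_n) B :
  normInf a <= B -> normInf b <= B -> normInf (row_mx a b) <= B.
Proof.
move=> aB bB; apply: normInf_le => [|i]; first exact: le_trans (normInf_ge0 a) aB.
rewrite -[i]splitK; case: (split i) => j /=.
  by rewrite row_mxEl (le_trans (le_normInf _ _)).
by rewrite row_mxEr (le_trans (le_normInf _ _)).
Qed.

Lemma normInfD n (a b : 'rV[R]_n) : normInf (a + b) <= normInf a + normInf b.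
Proof.
apply: normInf_le => [|i]; first by rewrite addr_ge0 ?normInf_ge0.
by rewrite mxE (le_trans (ler_normD _ _)) // lerD ?le_normInf.
Qed.

Lemma normInfZ n (c : R) (a : 'rV[R]_n) : normInf (c *: a) <= `|c| * normInf a.
Proof.
apply: normInf_le => [|i]; first by rewrite mulr_ge0 ?normInf_ge0.
by rewrite mxE normrM ler_wpM2l ?le_normInf.
Qed.

Lemma normInf_sum_le n (s : seq 'rV[R]_n) K :
  {in s, forall a, normInf a <= K} -> normInf (\sum_(a <- s) a) <= (size s)%:R * K.
Proof.
elim: s => [_|a s IH sK].
  by rewrite big_nil mul0r normInf_le // => i; rewrite mxE normr0.
rewrite big_cons (le_trans (normInfD _ _)) //= mulrS mulrDl mul1r lerD ?sK ?mem_head //.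
by apply: IH => b bs; rewrite sK // inE bs orbT.
Qed.

Lemma normr_foldr_max_le (s : seq R) (x0 K : R) :
  `|x0| <= K -> {in s, forall x, `|x| <= K} -> `|foldr Num.max x0 s| <= K.
Proof.
elim: s => //= x s IH x0K sK.
have sK' : {in s, forall y, `|y| <= K} by move=> y ys; rewrite sK // inE ys orbT.
by case: (leP x (foldr Num.max x0 s)) => _; [apply: IH | apply: sK; rewrite mem_head].
Qed.

Lemma normInf_aggregate_le r k (s : seq 'rV[R]_r) K :
  0 <= K -> {in s, forall a, normInf a <= K} ->
  normInf (aggregate k s) <= (maxn (size s) 1)%:R * K.
Proof.
move=> K0 sK; have KD : K <= (maxn (size s) 1)%:R * K.
  by rewrite ler_peMl // ler1n leq_maxr.
have D0 := le_trans K0 KD.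
case: s sK KD D0 => [_ _ D0|a s' sK KD D0].
  by apply: normInf_le => // i; rewrite mxE normr0.
case: k => /=.
- by rewrite (le_trans (normInf_sum_le sK)) // ler_wpM2r // ler_nat leq_maxl.
- rewrite (le_trans (normInfZ _ _)) // (le_trans _ KD) //.
  rewrite (le_trans (ler_wpM2l (normr_ge0 _) (normInf_sum_le sK))) //.
  by rewrite mulrA ger0_norm ?invr_ge0 // mulVf ?mul1r // pnatr_eq0.
- apply: normInf_le => // j.
  rewrite mxE -(foldr_map (fun b : 'rV[R]_r => b ord0 j) Num.max) (le_trans _ KD) //.
  apply: normr_foldr_max_le => [|y /mapP [b bs ->]].
    by rewrite (le_trans (le_normInf _ _)) // sK ?mem_head.
  by rewrite (le_trans (le_normInf _ _)) // sK // inE bs orbT.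
Qed.

End SupNorm.

Section AffineGrowth.
Variable R : realType.

Lemma lipschitz_normr_le (f : R -> R) (K : R) :
  (forall a b, `|f a - f b| <= K * `|a - b|) ->
  forall y, `|f y| <= `|f 0| + `|K| * `|y|.
Proof.
move=> fK y; have := fK y 0; rewrite subr0 => fyK.
rewrite -[f y](subrK (f 0)) addrC (le_trans (ler_normD _ _)) // lerD2l.
by rewrite (le_trans fyK) // ler_wpM2r // ler_norm.
Qed.

Lemma normr_affine_le (I : finType) (P : pred I) (b : R) (w s : I -> R) (B : R) :
  (forall u, P u -> `|s u| <= B) ->
  `|b + \sum_(u | P u) w u * s u| <= `|b| + (\sum_(u | P u) `|w u|) * B.
Proof.
move=> sB; rewrite (le_trans (ler_normD _ _)) // lerD2l big_distrl /=.
rewrite (le_trans (ler_norm_sum _ _ _)) //; apply: ler_sum => u Pu.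
by rewrite normrM ler_wpM2l ?sB.
Qed.

Variables (p q : nat) (F : fnn R p q).

Lemma size_fnn_vals x k : size (fnn_vals F x k) = k.
Proof. by elim: k => //= k IH; rewrite size_rcons IH. Qed.

Lemma fnn_node_val_bound k (B : R) : 0 <= B ->
  exists C : R, 0 <= C /\ forall x s,
    (forall i, `|nth 0 s i| <= B * (normInf x + 1)) ->
    `|fnn_node_val F x k s| <= C * (normInf x + 1).
Proof.
move=> B0; rewrite /fnn_node_val.
case: insubP => [v _ vk|_]; last by exists 0; split => // x s _; rewrite normr0 mul0r.
case: insubP => [i _ _|kp].
  exists 1; split => // x s _; rewrite mul1r (le_trans (le_normInf x i)) //.
  by rewrite lerDl.
have [K actK] : exists K : R,
    forall a b, `|fnn_act (f:=F) v a - fnn_act (f:=F) v b| <= K * `|a - b|.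
  by apply: fnn_lipschitz; rewrite vk leqNgt.
set W : R := \sum_(u | fnn_edge (f:=F) u v) `|fnn_w (f:=F) u v|.
have W0 : 0 <= W by apply: sumr_ge0.
exists (`|fnn_act (f:=F) v 0| + `|K| * (`|fnn_b (f:=F) v| + W * B)).
split; first by rewrite addr_ge0 ?mulr_ge0 ?addr_ge0 ?mulr_ge0.
move=> x s sB.
have yB := normr_affine_le (P := fnn_edge (f:=F) ^~ v) (fnn_b (f:=F) v)
  (fnn_w (f:=F) ^~ v) (fun u _ => sB u).
rewrite (le_trans (lipschitz_normr_le actK _)) //.
rewrite (le_trans (lerD (lexx _) (ler_wpM2l (normr_ge0 K) yB))) // -/W.
(* the constant part [a] is absorbed into the slope because |x| + 1 >= 1 *)
set a := `|fnn_act (f:=F) v 0| + `|K| * `|fnn_b (f:=F) v|.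
have : a * 1 <= a * (normInf x + 1).
  by rewrite ler_wpM2l ?addr_ge0 ?mulr_ge0 // lerDr normInf_ge0.
rewrite /a; lra.
Qed.

Lemma fnn_vals_bound k : exists B : R, 0 <= B /\
  forall x i, `|nth 0 (fnn_vals F x k) i| <= B * (normInf x + 1).
Proof.
elim: k => [|k [B [B0 valsB]]].
  by exists 0; split => // x i; rewrite nth_nil normr0 mul0r.
have [C [C0 nodeC]] := fnn_node_val_bound k B0.
exists (Num.max B C); split; first by rewrite le_max B0.
move=> x i; have t0 : 0 <= normInf x + 1 by rewrite addr_ge0 ?normInf_ge0.
rewrite /= nth_rcons size_fnn_vals.
case: ifP => _; first by rewrite (le_trans (valsB x i)) // ler_wpM2r // le_max lexx.
case: ifP => _; last by rewrite normr0 mulr_ge0 // le_max B0.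
by rewrite (le_trans (nodeC x _ (valsB x))) // ler_wpM2r // le_max lexx orbT.
Qed.

Lemma fnn_eval_bound : exists B : R, 0 <= B /\
  forall x, normInf (fnn_eval F x) <= B * (normInf x + 1).
Proof.
have [B [B0 valsB]] := fnn_vals_bound (p + fnn_N F).
exists B; split => // x; apply: normInf_le => [|j]; last by rewrite mxE valsB.
by rewrite mulr_ge0 // addr_ge0 ?normInf_ge0.
Qed.

End AffineGrowth.

Section GraphSignals.
Variables (R : realType) (p : nat) (V : finType) (adj : rel V) (x : V -> 'rV[R]_p).

Lemma closed_nbhd_norm_ge0 v : 0 <= closed_nbhd_norm adj x v.
Proof. exact: bigmax_ge_id. Qed.

Lemma le_closed_nbhd_norm v w :
  (w == v) || adj v w -> normInf (x w) <= closed_nbhd_norm adj x v.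
Proof. exact: (le_bigmax_cond _ (fun w => normInf (x w))). Qed.

Lemma closed_nbhd_norm_le_signal_norm v : closed_nbhd_norm adj x v <= signal_norm x.
Proof.
apply: bigmax_le => [|w _]; first exact: bigmax_ge_id.
exact: (@le_bigmax _ _ _ 0 (fun w => normInf (x w))).
Qed.

Lemma maxn_deg_le_card v : (maxn (deg adj v) 1 <= #|V|)%N.
Proof. by rewrite geq_max max_card; apply/card_gt0P; exists v. Qed.

End GraphSignals.

Lemma gnn_apply_bound (R : realType) (p : nat) (L : gnn_layer R p) :
  exists G : R, 0 <= G /\ forall (V : finType) (adj : rel V) x (v : V),
    normInf (gnn_apply L adj x v)
      <= G * (closed_nbhd_norm adj x v + 1) * (maxn (deg adj v) 1)%:R.
Proof.
have [Bm [Bm0 msgB]] := fnn_eval_bound (gl_msg L).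
have [Bc [Bc0 combB]] := fnn_eval_bound (gl_comb L).
exists (Bc * (2 + Bm)); split; first by rewrite mulr_ge0 ?addr_ge0.
move=> V adj x v; set c := closed_nbhd_norm adj x v; set D := (maxn _ 1)%:R.
have c0 : 0 <= c := closed_nbhd_norm_ge0 adj x v.
have D1 : 1 <= D by rewrite ler1n leq_maxr.
rewrite /gnn_apply; set msgs := map _ _.
have msgsB : {in msgs, forall a, normInf a <= Bm * (c + 1)}.
  move=> a /mapP [w]; rewrite mem_enum => vw ->.
  rewrite (le_trans (msgB _)) // ler_wpM2l // lerD2r.
  by apply: normInf_row_mx_le; apply: le_closed_nbhd_norm; apply/orP; [left | right].
have aggB := normInf_aggregate_le (gl_agg L) (mulr_ge0 Bm0 (addr_ge0 c0 ler01)) msgsB.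
rewrite size_map -cardE -/(deg adj v) -/D in aggB.
have xvB : normInf (x v) <= c by apply: le_closed_nbhd_norm; rewrite eqxx.
set u := (c + 1) * D.
have u1 : 1 <= u by rewrite -[1]mulr1 ler_pM // lerDr.
have cu : c <= u.
  by have := ler_wpM2l (addr_ge0 c0 ler01) D1; rewrite mulr1 /u; lra.
have inB : normInf (row_mx (x v) (aggregate (gl_agg L) msgs)) <= (1 + Bm) * u.
  have Bmu : 0 <= Bm * u by rewrite mulr_ge0 // (le_trans ler01 u1).
  rewrite mulrCA [D * _]mulrC -/u in aggB.
  by apply: normInf_row_mx_le; lra.
by rewrite (le_trans (combB _)) // -mulrA -/u -mulrA ler_wpM2l //; lra.
Qed.

Theorem lemma4p2 (R : realType) (p : nat) (L : gnn_layer R p) :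
  exists gamma : nat, (0 < gamma)%N /\
    forall (V : finType) (adj : rel V), symmetric adj -> irreflexive adj ->
    forall (x : V -> 'rV[R]_p) (v : V),
      normInf (gnn_apply L adj x v)
        <= gamma%:R * (closed_nbhd_norm adj x v + 1) * (maxn (deg adj v) 1)%:R
      /\ gamma%:R * (closed_nbhd_norm adj x v + 1) * (maxn (deg adj v) 1)%:R
        <= gamma%:R * (signal_norm x + 1) * #|V|%:R.
Proof.
have [G [G0 LG]] := gnn_apply_bound L.
exists (Num.Def.archi_bound G).+1; split => // V adj _ _ x v.
have Ggamma : G <= (Num.Def.archi_bound G).+1%:R.
  by rewrite (le_trans (ltW (archi_boundP G0))) // ler_nat.
have c1 : 0 <= closed_nbhd_norm adj x v + 1 by rewrite addr_ge0 ?closed_nbhd_norm_ge0.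
split; first by rewrite (le_trans (LG V adj x v)) // !ler_wpM2r.
rewrite ler_pM ?mulr_ge0 ?ler_wpM2l ?lerD2r ?ler_nat ?maxn_deg_le_card //.
exact: closed_nbhd_norm_le_signal_norm.
Qed.
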